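(* In the model described in the context, Algorithm 1 with any threshold $t\ge f+1$ satisfies weak accuracy.
   Context: Model. An asynchronous system has client processes (writers, readers, auditors) and $n$ storage objects $o_1,\dots,o_n$. Each $o_k$ is a linearisable loggable read/write register with a log $L_k$ (initially empty). Its rw-read() returns the current block and appends $\langle p_r,\mathit{label}(b)\rangle$ to $L_k$, where $p_r$ is the invoking reader and $\mathit{label}(b)$ identifies the value from which $b$ was derived; rw-getLog() returns $L_k$. Correct objects create records only for rw-read operations they actually executed. A register over values $\mathbb{V}$ is emulated by information dispersal: block $b_{v_k}$ of $v$ is stored at $o_k$, and any $\tau>f$ distinct blocks recover $v$. Reads are fast. Faults. At most $f$ storage objects are faulty; a faulty object may crash, omit its block, omit log records from auditors, and report records of nonexistent reads. Providing set $P_{p_r,v}$: the set of objects that received a write of $b_{v_k}$ and responded $b_{v_k}$ to a read request of $p_r$. Algorithm 1 (a-audit with threshold $t$): 1. Invoke rw-getLog on all $n$ objects in parallel, and wait for responses from at least $n-f$ of them; let $L[k]$ be the log received from $o_k$. 2. For every record $\langle p_r,\mathit{label}(v)\rangle$ in some $L[k]$, let $\mathcal{E}_{p_r,v}=\{k:\langle p_r,\mathit{label}(v)\rangle\in L[k]\}$, and add it to $E_A$ iff $|\mathcal{E}_{p_r,v}|\ge t$. 3. Return $E_A$. Weak accuracy: for every correct reader $p_r$ that never invoked an a-read before the audit (so $P_{p_r,v}=\varnothing$), $\mathcal{E}_{p_r,v}\notin E_A$ for all $v$. *)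

From mathcomp Require Import all_boot.
Set Implicit Arguments. Unset Strict Implicit. Unset Printing Implicit Defensive.

(* Model of one execution, as seen by one a-audit (Algorithm 1).
   Objects are o_k, k : 'I_n.  Readers have type Reader, values type V,
   and label : V -> Label identifies values in log records.
   - executed k p l : object o_k actually executed an rw-read invoked by
     reader p, returning a block derived from the value with label l.
   - responded : the set of objects whose rw-getLog response the auditor
     received (step 1), with logs Lrecv k.                                  *)

Definition evidence (n : nat) (Reader Label V : eqType) (label : V -> Label)
    (responded : {set 'I_n}) (Lrecv : 'I_n -> seq (Reader * Label))
    (p : Reader) (v : V) : {set 'I_n} :=
  [set k in responded | (p, label v) \in Lrecv k].

Definition audit_reports (n t : nat) (Reader Label V : eqType)
    (label : V -> Label) (responded : {set 'I_n})
    (Lrecv : 'I_n -> seq (Reader * Label)) (p : Reader) (v : V) : bool :=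
  t <= #|evidence label responded Lrecv p v|.

From mathcomp Require Import all_boot.

Set Implicit Arguments. Unset Strict Implicit. Unset Printing Implicit Defensive.

(* A record of a reader that never invoked an a-read cannot appear in the log
   of a correct object, so all evidence against such a reader comes from the
   at most f faulty objects, which is below any threshold t > f. *)

Section Evidence.

Variables (n : nat) (Reader Label V : eqType) (label : V -> Label).
Variables (responded : {set 'I_n}) (Lrecv : 'I_n -> seq (Reader * Label)).

Lemma evidence_sub (S : {set 'I_n}) (p : Reader) (v : V) :
  (forall k, k \notin S -> (p, label v) \notin Lrecv k) ->
  evidence label responded Lrecv p v \subset S.
Proof.
move=> notin_log; apply/subsetP => k; rewrite inE => /andP[_ in_log].
by apply: contraLR in_log; exact: notin_log.
Qed.

Lemma card_evidence_le (S : {set 'I_n}) (p : Reader) (v : V) :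
  (forall k, k \notin S -> (p, label v) \notin Lrecv k) ->
  #|evidence label responded Lrecv p v| <= #|S|.
Proof. by move/evidence_sub/subset_leq_card. Qed.

End Evidence.

Theorem lemma6
  (n f t : nat) (Reader Label V : eqType) (label : V -> Label)
  (faulty : {set 'I_n})
  (executed : 'I_n -> Reader -> Label -> bool)
  (correct_reader : Reader -> bool)
  (invoked_aread : Reader -> bool)
  (responded : {set 'I_n})
  (Lrecv : 'I_n -> seq (Reader * Label))
  (* at most f faulty storage objects *)
  (Hfaulty : #|faulty| <= f)
  (* the auditor waits for at least n - f responses *)
  (Hresp : n - f <= #|responded|)
  (* correct objects report only records of rw-reads they actually executed *)
  (Hcorrect_obj : forall k, k \notin faulty -> forall p l,
      (p, l) \in Lrecv k -> executed k p l)
  (* a correct reader invokes rw-read only within an a-read *)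
  (Hcorrect_rd : forall k p l, correct_reader p -> executed k p l ->
      invoked_aread p)
  (* threshold *)
  (Ht : f + 1 <= t)
  (pr : Reader) (Hpr : correct_reader pr) (Hnoread : ~~ invoked_aread pr) :
  forall v : V, ~~ audit_reports t label responded Lrecv pr v.
Proof.
move=> v; rewrite /audit_reports -ltnNge.
have no_record k : k \notin faulty -> (pr, label v) \notin Lrecv k.
  move=> correct_k; apply/negP => /(Hcorrect_obj _ correct_k).
  by move/(Hcorrect_rd _ _ _ Hpr); apply/negP.
apply: leq_ltn_trans (card_evidence_le responded no_record) _.
by apply: leq_ltn_trans Hfaulty _; rewrite -addn1.
Qed.
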